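(* In the BBoxER framework described in the context, for fixed initial model $m_0$, seed $\omega$, algorithm $a$ and budget $b$, and any datasets $D_1,\dots,D_n$, $$\#\{\mathrm{BBoxER}(m_0,\omega,D_i,a,b): i\in\{1,\dots,n\}\}\le \sup_{D}\prod_{i=1}^b k_i(\omega,D,a,b).$$
   Context: $\mathrm{BBoxER}(m_0,\omega,D,a,b)$ is the model output by the following procedure: a black-box optimization algorithm $a$, deterministic given its seed $\omega$, is initialized from $\omega$; at each iteration $i=1,\dots,b$ it proposes a parameter $x_i$ and model $m_i=\mathrm{modified}(m_0,x_i)$ (for a fixed map $\mathrm{modified}$), declares a finite number $k_i=k_i(\omega,D,a,b)\ge1$ of possible comparison outcomes, and receives $\mathrm{choice}_i\in\{1,\dots,k_i\}$ computed by comparing $m_1,\dots,m_i$ on the dataset $D$; finally it recommends $\widehat x$ and outputs $\mathrm{modified}(m_0,\widehat x)$. The algorithm accesses $D$ only through the $\mathrm{choice}_i$, so $x_i,k_i$ are deterministic functions of $(\omega,a,b,\mathrm{choice}_1,\dots,\mathrm{choice}_{i-1})$ and $\widehat x$ is a deterministic function of $(\omega,a,b,\mathrm{choice}_1,\dots,\mathrm{choice}_b)$. The supremum is over all datasets. *)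

From mathcomp Require Import all_boot.
Set Implicit Arguments. Unset Strict Implicit. Unset Printing Implicit Defensive.

(* A black-box optimization algorithm [a] over parameter space [X], with seeds
   in [Omega].  It is deterministic given its seed [w] and budget [b]; it only
   sees the past comparison outcomes (the history [h : seq nat] of choices
   choice_1, ..., choice_{i-1}):
   - [a_k w b h] : number k_i of possible comparison outcomes declared at step i
   - [a_x w b h] : parameter x_i proposed at step i
   - [a_rec w b h] : recommended parameter after the full history (length b). *)
Record bb_algo (Omega X : Type) := BBAlgo {
  a_k : Omega -> nat -> seq nat -> nat;
  a_x : Omega -> nat -> seq nat -> X;
  a_rec : Omega -> nat -> seq nat -> X }.

Section BBoxER.
Variables (Omega X M Data : Type).
Variable modified : M -> X -> M.
(* [cmp D ms k] : the comparison outcome in {1..k} obtained by comparing the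
   models ms = [:: m_1; ...; m_i] on dataset D, when k outcomes are declared. *)
Variable cmp : Data -> seq M -> nat -> nat.

Fixpoint bb_hist (m0 : M) (w : Omega) (D : Data) (a : bb_algo Omega X) (b : nat)
    (i : nat) : seq nat :=
  match i with
  | 0 => [::]
  | i'.+1 =>
      let h := bb_hist m0 w D a b i' in
      let ms := [seq modified m0 (a_x a w b (take j h)) | j <- iota 0 i] in
      rcons h (cmp D ms (a_k a w b h))
  end.

Definition bb_ks m0 w D a b : seq nat :=
  let h := bb_hist m0 w D a b b in
  [seq a_k a w b (take j h) | j <- iota 0 b].

Definition BBoxER m0 w D a b : M :=
  modified m0 (a_rec a w b (bb_hist m0 w D a b b)).

End BBoxER.

From mathcomp Require Import all_boot.

(* The output of BBoxER is a function of the final history of choices, so it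
   suffices to count histories.  These are the leaves of depth [b] of a tree
   in which the node reached by history [h] has [a_k h] children.  A set of
   leaves along each of whose branches the product of the arities is at most
   [B] has at most [B] elements: split the leaves by their first choice, one
   of the [k] values allowed at the root, and bound each subtree by [B %/ k]. *)

Definition choice_seq (K : seq nat -> nat) (s : seq nat) : bool :=
  all (fun i => 0 < nth 0 s i <= K (take i s)) (iota 0 (size s)).

Definition arity_prod (K : seq nat -> nat) (s : seq nat) : nat :=
  \prod_(i < size s) K (take i s).

Lemma choice_seq_cons K c s :
  choice_seq K (c :: s) = (0 < c <= K [::]) && choice_seq (fun t => K (c :: t)) s.
Proof. by rewrite /choice_seq /= -add1n iotaDl all_map. Qed.

Lemma arity_prod_cons K c s :
  arity_prod K (c :: s) = K [::] * arity_prod (fun t => K (c :: t)) s.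
Proof. by rewrite /arity_prod /= big_ord_recl. Qed.

Lemma size_undup_map (T1 T2 : eqType) (f : T1 -> T2) s :
  size (undup (map f s)) <= size (undup s).
Proof.
rewrite -(size_map f (undup s)); apply: uniq_leq_size (undup_uniq _) _ => y.
by rewrite mem_undup => /mapP [x xs ->]; rewrite map_f ?mem_undup.
Qed.

Lemma size_undup_le_sum_head (T : eqType) (x0 : T) (cs : seq T) (S : seq (seq T)) :
  all (fun s => (s != [::]) && (head x0 s \in cs)) S ->
  size (undup S) <=
    \sum_(c <- cs) size (undup [seq behead s | s <- S & head x0 s == c]).
Proof.
move=> /allP S_cs.
pose tails c := undup [seq behead s | s <- S & head x0 s == c].
have sub_flatten : {subset undup S <= flatten [seq map (cons c) (tails c) | c <- cs]}.
  move=> s; rewrite mem_undup => sS; have /andP [] := S_cs s sS.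
  case: s sS => // c t sS _ /= c_cs.
  apply/flattenP; exists (map (cons c) (tails c)); first exact: map_f.
  by rewrite map_f // mem_undup; apply/mapP; exists (c :: t); rewrite ?mem_filter /= ?eqxx.
apply: leq_trans (uniq_leq_size (undup_uniq S) sub_flatten) _.
by rewrite size_flatten sumnE !big_map; under eq_bigr do rewrite size_map.
Qed.

Lemma size_undup_choice_seqs_le (K : seq nat -> nat) n (S : seq (seq nat)) B :
  all (fun s => size s == n) S -> all (choice_seq K) S ->
  all (fun s => arity_prod K s <= B) S ->
  size (undup S) <= B.
Proof.
elim: n K S B => [|n IHn] K S B /allP S_n /allP S_K /allP S_B.
  case: S S_n S_K S_B => [//|s S'] S_n _ S_B.
  apply: leq_trans (S_B s (mem_head _ _)); rewrite /arity_prod (eqP (S_n s _)) ?mem_head //.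
  rewrite big_ord0; apply: (@uniq_leq_size _ _ [:: [::]]) (undup_uniq _) _ => t.
  by rewrite mem_undup => /S_n; rewrite size_eq0 => /eqP ->; rewrite mem_head.
set k := K [::].
have S_cons s : s \in S -> exists c t, [/\ s = c :: t, size t = n &
    (0 < c <= k) && choice_seq (fun t => K (c :: t)) t].
  move=> sS; move: (S_n s sS) (S_K s sS); case: s sS => // c t sS.
  by rewrite eqSS choice_seq_cons => /eqP size_t ck; exists c, t.
apply: leq_trans (@size_undup_le_sum_head _ 0 (index_iota 1 k.+1) S _) _.
  apply/allP => s /S_cons [c [t [-> _ /andP [/andP [c_gt0 c_le] _]]]].
  by rewrite /= mem_index_iota c_gt0 ltnS.
apply: (@leq_trans (\sum_(1 <= c < k.+1) B %/ k)).
  rewrite big_seq_cond [X in _ <= X]big_seq_cond; apply: leq_sum => c.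
  rewrite andbT mem_index_iota => /andP [c_gt0 c_le].
  have k_gt0 : 0 < k := leq_trans c_gt0 c_le.
  apply: (IHn (fun t => K (c :: t))); apply/allP => u /mapP [s];
    rewrite mem_filter => /andP [/eqP hs sS] ->;
    have [c' [t [s_def size_t /andP [_ Kt]]]] := S_cons s sS;
    move: hs; rewrite s_def /= => hc; subst c'.
  - by rewrite size_t.
  - exact: Kt.
  - by rewrite leq_divRL // mulnC -arity_prod_cons -s_def S_B.
rewrite sum_nat_const_nat subSS subn0 mulnC; exact: leq_divM.
Qed.

Section History.
Variables (Omega X : Type) (M : eqType) (Data : Type)
    (modified : M -> X -> M) (cmp : Data -> seq M -> nat -> nat)
    (a : bb_algo Omega X) (m0 : M) (w : Omega) (b : nat) (D : Data).

Local Notation hist := (bb_hist modified cmp m0 w D a b).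

Lemma size_hist i : size (hist i) = i.
Proof. by elim: i => //= i IHi; rewrite size_rcons IHi. Qed.

Lemma take_hist i j : i <= j -> take i (hist j) = hist i.
Proof.
elim: j => [|j IHj]; first by rewrite leqn0 => /eqP ->.
rewrite leq_eqVlt => /orP [/eqP -> | lt_ij]; first by rewrite take_oversize ?size_hist.
by rewrite /= -cats1 takel_cat ?IHj ?size_hist.
Qed.

Lemma nth_hist i j : i < j ->
  nth 0 (hist j) i =
    cmp D [seq modified m0 (a_x a w b (take l (hist i))) | l <- iota 0 i.+1]
        (a_k a w b (hist i)).
Proof.
move=> lt_ij; rewrite -(nth_take 0 (ltnSn i)) take_hist //=.
by rewrite nth_rcons size_hist ltnn eqxx.
Qed.

Lemma choice_seq_hist i :
  (forall h, 0 < a_k a w b h) ->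
  (forall ms k, 0 < k -> 0 < cmp D ms k <= k) ->
  choice_seq (a_k a w b) (hist i).
Proof.
move=> k_gt0 cmp_range; apply/allP => j; rewrite mem_iota size_hist => /andP [_ lt_ji].
by rewrite nth_hist // take_hist ?(ltnW lt_ji) // cmp_range.
Qed.

Lemma prod_bb_ks : \prod_(k <- bb_ks modified cmp m0 w D a b) k =
  arity_prod (a_k a w b) (hist b).
Proof.
by rewrite /bb_ks big_map /arity_prod size_hist -(subn0 b) -/(index_iota 0 b) big_mkord subn0.
Qed.

End History.

Theorem theorem5 (Omega X : Type) (M : eqType) (Data : Type)
    (modified : M -> X -> M) (cmp : Data -> seq M -> nat -> nat)
    (a : bb_algo Omega X) (m0 : M) (w : Omega) (b : nat) (Ds : seq Data) :
  (* each step declares at least one possible outcome *)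
  (forall h : seq nat, 1 <= a_k a w b h) ->
  (* the received choice lies in {1, ..., k} *)
  (forall (D : Data) (ms : seq M) (k : nat), 1 <= k -> 1 <= cmp D ms k <= k) ->
  forall B : nat,
    (forall D : Data, \prod_(k <- bb_ks modified cmp m0 w D a b) k <= B) ->
    size (undup [seq BBoxER modified cmp m0 w D a b | D <- Ds]) <= B.
Proof.
move=> k_gt0 cmp_range B prod_le_B.
pose hist D := bb_hist modified cmp m0 w D a b b.
have -> : [seq BBoxER modified cmp m0 w D a b | D <- Ds] =
    [seq modified m0 (a_rec a w b h) | h <- map hist Ds] by rewrite -map_comp.
apply: leq_trans (size_undup_map _ _ _ (map hist Ds)) _.
apply: (@size_undup_choice_seqs_le (a_k a w b) b); apply: all_mapT => D /=.
- by rewrite size_hist.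
- exact: choice_seq_hist k_gt0 (cmp_range D).
- by rewrite -prod_bb_ks.
Qed.
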